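(* In a star-shaped zero-sum network game with center player $1$ (i.e. $r_{i,j}=0$ whenever $i\neq1$ and $j\neq1$), the Nash equilibrium value of the center player is unique: for any two Nash equilibria $\pi,\pi'$ of the game, $r_1(\pi)=r_1(\pi')$.
   Context: Players $\mathcal N=[n]$ with finite action sets $\mathcal A_i$ and pairwise matrices $r_{1,i}\in\mathbb R^{|\mathcal A_1|\times|\mathcal A_i|}$, $r_{i,1}\in\mathbb R^{|\mathcal A_i|\times|\mathcal A_1|}$; for a product policy $\pi$, $r_1(\pi)=\sum_{i\neq1}\pi_1^\top r_{1,i}\pi_i$ and $r_i(\pi)=\pi_i^\top r_{i,1}\pi_1$ for $i\neq1$. Zero-sum means $\sum_ir_i(\pi)=0$ for every product policy. A Nash equilibrium is a product policy $\pi$ with $r_i(\mu_i,\pi_{-i})\le r_i(\pi)$ for all $i$ and $\mu_i\in\Delta(\mathcal A_i)$. *)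

From mathcomp Require Import all_boot all_order all_algebra.
Set Implicit Arguments. Unset Strict Implicit. Unset Printing Implicit Defensive.
Import Order.TTheory GRing.Theory Num.Theory.
Local Open Scope ring_scope.

(* Players are 'I_n.+1; the center (paper's player 1) is ord0.
   Player i has action set 'I_(k i).  A mixed strategy of player i is a
   function 'I_(k i) -> R lying in the probability simplex. *)

Definition in_simplex (R : realFieldType) (m : nat) (p : 'I_m -> R) : Prop :=
  (forall a, 0 <= p a) /\ \sum_(a < m) p a = 1.

Definition bil (R : realFieldType) (m l : nat) (p : 'I_m -> R) (M : 'M[R]_(m, l))
    (q : 'I_l -> R) : R :=
  \sum_(a < m) \sum_(b < l) p a * M a b * q b.

Definition r_center (R : realFieldType) (n : nat) (k : 'I_n.+1 -> nat)
    (r1 : forall i : 'I_n.+1, 'M[R]_(k ord0, k i))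
    (p0 : 'I_(k ord0) -> R) (pi : forall i : 'I_n.+1, 'I_(k i) -> R) : R :=
  \sum_(i < n.+1 | i != ord0) bil p0 (r1 i) (pi i).

Definition r_leaf (R : realFieldType) (n : nat) (k : 'I_n.+1 -> nat)
    (ri1 : forall i : 'I_n.+1, 'M[R]_(k i, k ord0)) (i : 'I_n.+1)
    (q : 'I_(k i) -> R) (p0 : 'I_(k ord0) -> R) : R :=
  bil q (ri1 i) p0.

Definition reward (R : realFieldType) (n : nat) (k : 'I_n.+1 -> nat)
    (r1 : forall i : 'I_n.+1, 'M[R]_(k ord0, k i))
    (ri1 : forall i : 'I_n.+1, 'M[R]_(k i, k ord0))
    (pi : forall i : 'I_n.+1, 'I_(k i) -> R) (i : 'I_n.+1) : R :=
  if i == ord0 then r_center r1 (pi ord0) pi else r_leaf ri1 (pi i) (pi ord0).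

Definition product_policy (R : realFieldType) (n : nat) (k : 'I_n.+1 -> nat)
    (pi : forall i : 'I_n.+1, 'I_(k i) -> R) : Prop :=
  forall i, in_simplex (pi i).

Definition zero_sum (R : realFieldType) (n : nat) (k : 'I_n.+1 -> nat)
    (r1 : forall i : 'I_n.+1, 'M[R]_(k ord0, k i))
    (ri1 : forall i : 'I_n.+1, 'M[R]_(k i, k ord0)) : Prop :=
  forall pi, product_policy pi -> \sum_(i < n.+1) reward r1 ri1 pi i = 0.

(* Nash equilibrium: no unilateral deviation mu_i in the simplex is profitable.
   The deviating profile (mu_i, pi_{-i}) is written out via r_center / r_leaf. *)
Definition nash (R : realFieldType) (n : nat) (k : 'I_n.+1 -> nat)
    (r1 : forall i : 'I_n.+1, 'M[R]_(k ord0, k i))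
    (ri1 : forall i : 'I_n.+1, 'M[R]_(k i, k ord0))
    (pi : forall i : 'I_n.+1, 'I_(k i) -> R) : Prop :=
  product_policy pi /\
  (forall mu : 'I_(k ord0) -> R, in_simplex mu ->
      r_center r1 mu pi <= r_center r1 (pi ord0) pi) /\
  (forall i : 'I_n.+1, i != ord0 -> forall mu : 'I_(k i) -> R, in_simplex mu ->
      r_leaf ri1 mu (pi ord0) <= r_leaf ri1 (pi i) (pi ord0)).

From mathcomp Require Import all_boot all_order all_algebra.
Set Implicit Arguments. Unset Strict Implicit. Unset Printing Implicit Defensive.
Import Order.TTheory GRing.Theory Num.Theory.
Local Open Scope ring_scope.

(* The leaves interact only with the center, so zero-sum says that against
   any center strategy x the center earns minus the leaves' total reward,
   whatever the leaves play.  If pi, pi' are equilibria, the leaves of pi'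
   best-respond to pi'_1, so swapping in the leaves of pi lowers their total
   against pi'_1 and raises the center's reward:
   r_1(pi') <= r_1(pi'_1, pi_{-1}) <= r_1(pi), the last step because pi_1 is a
   best response to pi_{-1}.  By symmetry the two values coincide. *)

Section StarGame.
Variables (R : realFieldType) (n : nat) (k : 'I_n.+1 -> nat)
    (r1 : forall i : 'I_n.+1, 'M[R]_(k ord0, k i))
    (ri1 : forall i : 'I_n.+1, 'M[R]_(k i, k ord0)).

Lemma product_policy_dfwith (pi : forall i : 'I_n.+1, 'I_(k i) -> R)
    (j : 'I_n.+1) (x : 'I_(k j) -> R) :
  product_policy pi -> in_simplex x -> product_policy (dfwith pi x).
Proof. by move=> pp sx i; case: dfwithP. Qed.

Lemma r_center_dfwith0 (pi : forall i : 'I_n.+1, 'I_(k i) -> R)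
    (x y : 'I_(k ord0) -> R) :
  r_center r1 y (dfwith pi x) = r_center r1 y pi.
Proof. by apply: eq_bigr => i nz; rewrite dfwith_out // eq_sym. Qed.

Lemma zero_sum_r_center (pi : forall i : 'I_n.+1, 'I_(k i) -> R)
    (x : 'I_(k ord0) -> R) :
  zero_sum r1 ri1 -> product_policy pi -> in_simplex x ->
  r_center r1 x pi = - \sum_(i < n.+1 | i != ord0) r_leaf ri1 (pi i) x.
Proof.
move=> zs pp sx.
have leaves : \sum_(i < n.+1 | i != ord0) reward r1 ri1 (dfwith pi x) i
            = \sum_(i < n.+1 | i != ord0) r_leaf ri1 (pi i) x.
  by apply: eq_bigr => i nz;
    rewrite /reward (negPf nz) dfwith_in dfwith_out // eq_sym.
have := zs _ (product_policy_dfwith pp sx).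
rewrite (bigD1 ord0) //= leaves /reward eqxx dfwith_in r_center_dfwith0.
by move/eqP; rewrite addr_eq0 => /eqP.
Qed.

Lemma nash_reward_center_le (pi pi' : forall i : 'I_n.+1, 'I_(k i) -> R) :
  zero_sum r1 ri1 -> nash r1 ri1 pi -> nash r1 ri1 pi' ->
  reward r1 ri1 pi' ord0 <= reward r1 ri1 pi ord0.
Proof.
move=> zs [pp [center_best _]] [pp' [_ leaves_best']].
rewrite /reward eqxx; apply: le_trans (center_best _ (pp' ord0)).
rewrite !zero_sum_r_center // lerN2.
by apply: ler_sum => i nz; apply: leaves_best'.
Qed.

End StarGame.

Theorem proposition9 (R : realFieldType) (n : nat) (k : 'I_n.+1 -> nat)
    (r1 : forall i : 'I_n.+1, 'M[R]_(k ord0, k i))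
    (ri1 : forall i : 'I_n.+1, 'M[R]_(k i, k ord0))
    (pi pi' : forall i : 'I_n.+1, 'I_(k i) -> R) :
  zero_sum r1 ri1 -> nash r1 ri1 pi -> nash r1 ri1 pi' ->
  reward r1 ri1 pi ord0 = reward r1 ri1 pi' ord0.
Proof.
move=> zs nash_pi nash_pi'; apply/eqP; rewrite eq_le.
by rewrite !nash_reward_center_le.
Qed.
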